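(* Let $R$ be an inp-minimal integral domain. Then the set of prime ideals of $R$ is linearly ordered by inclusion. In particular, every proper radical ideal of $R$ is prime, and there exists $N\in\mathbb N$ such that for all $a,b\in R$, either $b^N\in aR$ or $a^N\in bR$.
   Context: Rings are commutative with identity. A ring is inp-minimal if its theory in the language of rings $(+,\cdot,0,1)$ has burden $1$ (no inp-pattern of depth $2$ in one variable). $aR$ denotes the principal ideal generated by $a$. *)

From mathcomp Require Import all_boot all_order all_algebra.
Set Implicit Arguments. Unset Strict Implicit. Unset Printing Implicit Defensive.
Import GRing.Theory.
Local Open Scope ring_scope.

(* First-order formulas over R: GRing.formula R (ring language, possibly with
   parameters from R and the definable symbols Inv/Unit).  A "partitioned"
   formula phi(x; y) is read with the object variable x = 'X_0 and the
   parameter tuple y = ('X_1, 'X_2, ...): phi(a; b) holds iff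
   GRing.holds (a :: b) phi. *)
Definition sat2 (R : unitRingType) (phi : GRing.formula R) (a : R) (b : seq R) : Prop :=
  GRing.holds (a :: b) phi.

(* A finite (depth 2, width n) inp-array in R in one variable x:
   rows b1, b2 : nat -> seq R (columns j < n); row i is k_i-inconsistent,
   and every path (j1, j2) is consistent. *)
Definition inp_array2 (R : unitRingType) (phi1 phi2 : GRing.formula R)
    (k1 k2 n : nat) (b1 b2 : nat -> seq R) : Prop :=
  (forall s : seq nat, uniq s -> size s = k1 -> all (fun j => (j < n)%N) s ->
     ~ exists a : R, forall j, j \in s -> sat2 phi1 a (b1 j)) /\
  (forall s : seq nat, uniq s -> size s = k2 -> all (fun j => (j < n)%N) s ->
     ~ exists a : R, forall j, j \in s -> sat2 phi2 a (b2 j)) /\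
  (forall j1 j2, (j1 < n)%N -> (j2 < n)%N ->
     exists a : R, sat2 phi1 a (b1 j1) /\ sat2 phi2 a (b2 j2)).

(* Th(R) has an inp-pattern of depth 2 in one variable (in the monster model)
   iff, by compactness and elementarity, for some formulas and k1, k2 there are
   inp-arrays of every finite width n already in R. *)
Definition has_inp_pattern2 (R : unitRingType) : Prop :=
  exists (phi1 phi2 : GRing.formula R) (k1 k2 : nat),
    forall n : nat, exists b1 b2 : nat -> seq R, inp_array2 phi1 phi2 k1 k2 n b1 b2.

Definition inp_minimal (R : unitRingType) : Prop := ~ has_inp_pattern2 R.

Definition is_ideal (R : comRingType) (I : R -> Prop) : Prop :=
  I 0 /\ (forall x y, I x -> I y -> I (x + y)) /\ (forall r x, I x -> I (r * x)).

Definition is_proper_ideal (R : comRingType) (I : R -> Prop) : Prop :=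
  is_ideal I /\ ~ I 1.

Definition is_prime_ideal (R : comRingType) (P : R -> Prop) : Prop :=
  is_proper_ideal P /\ (forall x y, P (x * y) -> P x \/ P y).

Definition is_radical_ideal (R : comRingType) (I : R -> Prop) : Prop :=
  is_ideal I /\ (forall x (n : nat), I (x ^+ n) -> I x).

Definition in_principal (R : comRingType) (a x : R) : Prop := exists r, x = a * r.

(* If no exponent N works, then for every n there are a, b with a not dividing
   b^n and b not dividing a^n.  The formula "x in uR but not in vR",
   with parameters (a^j, a^(j+1)) on the first row and (b^j, b^(j+1)) on the
   second, then gives an inp-array of width n: each row is 2-inconsistent since
   the ideals a^jR form a chain, and a^i b^j witnesses the path (i, j), by
   cancellation in the domain.  Inp-minimality thus yields a uniform N, and for
   prime or radical ideals membership of a^N or b^N already forces membership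
   of a or b, which gives both the chain condition and primality. *)
From mathcomp Require Import all_boot all_order all_algebra.
From Stdlib Require Import Classical.
Set Implicit Arguments. Unset Strict Implicit. Unset Printing Implicit Defensive.
Import GRing.Theory.
Local Open Scope ring_scope.

Lemma in_principalMr (R : comNzRingType) (a x y : R) :
  in_principal a x -> in_principal a (x * y).
Proof. by move=> [r ->]; exists (r * y); rewrite mulrA. Qed.

Lemma in_principalX (R : comNzRingType) (a b : R) (k m : nat) : (k <= m)%N ->
  in_principal a (b ^+ k) -> in_principal a (b ^+ m).
Proof. by move=> km /(in_principalMr (b ^+ (m - k))); rewrite -exprD subnKC. Qed.

(* 'X_i \in 'X_j R, with the witness bound to 'X_3, the first variable not used
   by x and the two parameters of [principal_diff_formula]. *)
Definition mem_principal_formula (R : unitRingType) (i j : nat) : GRing.formula R :=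
  GRing.Exists 3 (GRing.Equal (GRing.Var _ i) (GRing.Mul (GRing.Var _ j) (GRing.Var _ 3))).

Definition principal_diff_formula (R : unitRingType) : GRing.formula R :=
  GRing.And (mem_principal_formula R 0 1) (GRing.Not (mem_principal_formula R 0 2)).

Lemma sat_principal_diff (R : comUnitRingType) (x u v : R) :
  sat2 (principal_diff_formula R) x [:: u; v] <-> in_principal u x /\ ~ in_principal v x.
Proof. by rewrite /sat2 /=. Qed.

Lemma principal_chain_row_inconsistent (R : comUnitRingType) (c : R) (s : seq nat) :
  uniq s -> size s = 2%N ->
  ~ exists x : R, forall j, j \in s ->
      sat2 (principal_diff_formula R) x [:: c ^+ j; c ^+ j.+1].
Proof.
case: s => [|i [|j [|? ?]]] //= /andP[]; rewrite inE => neq_ij _ _ [x hx].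
have [xi nxi] := iffLR (sat_principal_diff _ _ _) (hx i (mem_head _ _)).
have [xj nxj] : in_principal (c ^+ j) x /\ ~ in_principal (c ^+ j.+1) x.
  by apply/sat_principal_diff/hx; rewrite !inE eqxx orbT.
have step k l : (k < l)%N -> in_principal (c ^+ l) x -> in_principal (c ^+ k.+1) x.
  by move=> kl [r ->]; rewrite -(subnKC kl) exprD -mulrA; exists (c ^+ (l - k.+1) * r).
case: (ltngtP i j) => [ij|ji|eq_ij]; last by rewrite eq_ij eqxx in neq_ij.
- by apply: nxi; apply: (step _ j).
- by apply: nxj; apply: (step _ i).
Qed.

Lemma in_principal_mul2l (R : idomainType) (c a x : R) : c != 0 ->
  in_principal (c * a) (c * x) -> in_principal a x.
Proof. by move=> c0 [r]; rewrite -mulrA => /(mulfI c0) ->; exists r. Qed.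

Lemma nonzero_of_not_in_principalX (R : comNzRingType) (a b : R) (n : nat) :
  (0 < n)%N -> ~ in_principal b (a ^+ n) -> a != 0.
Proof.
by move=> n_gt0 nba; apply/eqP => a0; apply: nba; exists 0; rewrite a0 expr0n eqn0Ngt n_gt0 mulr0.
Qed.

Lemma principal_diff_path (R : idomainType) (a b : R) (n i j : nat) :
  ~ in_principal a (b ^+ n) -> ~ in_principal b (a ^+ n) -> (j < n)%N ->
  sat2 (principal_diff_formula R) (a ^+ i * b ^+ j) [:: a ^+ i; a ^+ i.+1].
Proof.
move=> nab nba jn; apply/sat_principal_diff; split; first by exists (b ^+ j).
rewrite exprSr => /in_principal_mul2l ab; apply: nab.
apply: (in_principalX (ltnW jn)); apply: ab.
by apply: expf_neq0; apply: (nonzero_of_not_in_principalX (leq_ltn_trans (leq0n j) jn) nba).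
Qed.

Lemma inp_array2_of_not_in_principalX (R : idomainType) (a b : R) (n : nat) :
  ~ in_principal a (b ^+ n) -> ~ in_principal b (a ^+ n) ->
  inp_array2 (principal_diff_formula R) (principal_diff_formula R) 2 2 n
    (fun j => [:: a ^+ j; a ^+ j.+1]) (fun j => [:: b ^+ j; b ^+ j.+1]).
Proof.
move=> nab nba; split; last split.
- by move=> s s_uniq s_size _; apply: principal_chain_row_inconsistent.
- by move=> s s_uniq s_size _; apply: principal_chain_row_inconsistent.
- move=> i j i_lt_n j_lt_n; exists (a ^+ i * b ^+ j); split.
    exact: principal_diff_path nab nba j_lt_n.
  by rewrite mulrC; apply: principal_diff_path nba nab i_lt_n.
Qed.

Definition uniform_divisibility_exponent (R : comNzRingType) (N : nat) : Prop :=
  forall a b : R, in_principal a (b ^+ N) \/ in_principal b (a ^+ N).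

Lemma inp_minimal_uniform_divisibility (R : idomainType) :
  inp_minimal R -> exists N, uniform_divisibility_exponent R N.
Proof.
move=> hR; apply: NNPP => noN; apply: hR.
exists (principal_diff_formula R), (principal_diff_formula R), 2%N, 2%N => n.
have [a [b [nab nba]]] : exists a b : R,
    ~ in_principal a (b ^+ n) /\ ~ in_principal b (a ^+ n).
  apply: NNPP => all_div; apply: noN; exists n => a b.
  apply: NNPP => nab_ba; apply: all_div; exists a, b.
  by split => div; apply: nab_ba; [left | right].
by eexists; eexists; apply: inp_array2_of_not_in_principalX nab nba.
Qed.

Lemma prime_idealX (R : comNzRingType) (P : R -> Prop) (x : R) (n : nat) :
  is_prime_ideal P -> P (x ^+ n) -> P x.
Proof.
move=> [[_ P_not1] P_prime]; elim: n => [|n IHn]; first by rewrite expr0.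
by rewrite exprS => /P_prime [].
Qed.

Section UniformDivisibility.

Variables (R : comNzRingType) (N : nat).
Hypothesis hN : uniform_divisibility_exponent R N.

Lemma prime_ideals_total (P Q : R -> Prop) :
  is_prime_ideal P -> is_prime_ideal Q ->
  (forall x, P x -> Q x) \/ (forall x, Q x -> P x).
Proof.
move=> hP hQ; have [[[_ [_ PM]] _] _] := hP; have [[[_ [_ QM]] _] _] := hQ.
have [[x [Px nQx]] | noPQ] := classic (exists x, P x /\ ~ Q x); last first.
  by left => x Px; apply: NNPP => nQx; apply: noPQ; exists x.
right => y Qy; apply: NNPP => nPy.
case: (hN x y) => [[r eyr] | [r exr]].
- by apply: nPy; apply: (prime_idealX (n := N) hP); rewrite eyr mulrC; apply: PM.
- by apply: nQx; apply: (prime_idealX (n := N) hQ); rewrite exr mulrC; apply: QM.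
Qed.

Lemma radical_ideal_prime (I : R -> Prop) :
  is_proper_ideal I -> is_radical_ideal I -> is_prime_ideal I.
Proof.
move=> hI [_ I_rad]; split => // x y Ixy; have [[_ [_ IM]] _] := hI.
case: (hN x y) => [[r eyr] | [r exr]].
- right; apply: (I_rad y N.+1).
  by rewrite exprS eyr mulrC [x * r]mulrC -mulrA; apply: IM.
- left; apply: (I_rad x N.+1).
  by rewrite exprS exr mulrA mulrC; apply: IM.
Qed.

End UniformDivisibility.

Theorem mainTheorem3 (R : idomainType) (hR : inp_minimal R) :
  (forall P Q : R -> Prop, is_prime_ideal P -> is_prime_ideal Q ->
     (forall x, P x -> Q x) \/ (forall x, Q x -> P x)) /\
  (forall I : R -> Prop, is_proper_ideal I -> is_radical_ideal I -> is_prime_ideal I) /\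
  (exists N : nat, forall a b : R,
     in_principal a (b ^+ N) \/ in_principal b (a ^+ N)).
Proof.
have [N hN] := inp_minimal_uniform_divisibility hR.
split; first exact: prime_ideals_total hN.
by split; [exact: radical_ideal_prime hN | exists N].
Qed.
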